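(* Let $n=2k$ and let $r$ be an integer with $1<r<k$ and $\gcd(r,k)=1$. Then $G(x)=\sum_{i=1}^{2^r-1}x^{(i2^{k-r}+1)(2^k-1)+1}$ takes all its values in $\mathbb{F}_{2^k}$, and as an $(n,k)$-function $G:\mathbb{F}_{2^n}\to\mathbb{F}_{2^k}$ it is vectorial bent.
   Context: An $(n,k)$-function $G$ is vectorial bent if for every $\lambda\in\mathbb{F}_{2^k}^*$ the Boolean function $\mathrm{Tr}^k_1(\lambda G(x))$ is bent, i.e. $|\sum_{x\in\mathbb{F}_{2^n}}(-1)^{\mathrm{Tr}^k_1(\lambda G(x))+\mathrm{Tr}^n_1(ax)}|=2^{k}$ for all $a\in\mathbb{F}_{2^n}$, where $\mathrm{Tr}^m_1(x)=\sum_{i=0}^{m-1}x^{2^i}$. *)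

From HB Require Import structures.
From mathcomp Require Import all_boot all_order all_algebra.
Set Implicit Arguments. Unset Strict Implicit. Unset Printing Implicit Defensive.
Import Order.TTheory GRing.Theory Num.Theory.
Local Open Scope ring_scope.

Definition trace_abs (F : finFieldType) (m : nat) (x : F) : F :=
  \sum_(i < m) x ^+ (2 ^ i).

Definition in_subfield (F : finFieldType) (k : nat) (x : F) : bool :=
  x ^+ (2 ^ k) == x.

(* (-1)^t for t in the prime field {0,1} of a characteristic-2 field. *)
Definition sgn01 (F : finFieldType) (t : F) : int := if t == 0 then 1 else -1.

Definition walsh (F : finFieldType) (n k : nat) (G : F -> F) (lam a : F) : int :=
  \sum_(x : F) sgn01 (trace_abs k (lam * G x) + trace_abs n (a * x)).

Definition vectorial_bent (F : finFieldType) (n k : nat) (G : F -> F) : Prop :=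
  forall lam : F, in_subfield k lam -> lam != 0 ->
  forall a : F, `| walsh n k G lam a | = (2 ^ k)%:Z.

Definition G_prop2 (F : finFieldType) (k r : nat) (x : F) : F :=
  \sum_(1 <= i < 2 ^ r) x ^+ ((i * 2 ^ (k - r) + 1) * (2 ^ k - 1) + 1).

From HB Require Import structures.
From mathcomp Require Import all_boot all_algebra finfield.
From mathcomp Require Import zify ring.
Import GRing.Theory.
Set Implicit Arguments. Unset Strict Implicit. Unset Printing Implicit Defensive.
Local Open Scope ring_scope.

(* Write q = 2^k, m = 2^r, and let K = F_q be the fixed field of the conjugation
   x |-> x^q of F = F_(q^2).  For lam in K^* and a in F, the Walsh sum of
   Tr^k_1(lam G) at a is W = sum_x (-1)^Tr^k_1(c x), where
   c x = lam G(x) + a x + (a x)^q is K-valued and satisfies c (y x) = y c(x) for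
   y in K^*.  Averaging over these scalings, and using that sum_(y in K)
   (-1)^Tr^k_1(y c) vanishes unless c = 0, gives (q - 1) W = q Z - q^2, where Z
   is the number of zeros of c; so |W| = q amounts to Z in {1, 2q - 1}.
   The bijective substitution w = x^(2^(k-r)) turns the zeros of c into those of
   a form P that is homogeneous of degree m over K.  On K, P s = alpha s^m with
   alpha = lam + a + a^q; on a line z + δ with δ outside K, (δ + δ^q) P is a
   polynomial A z^m + B z + C over K with B <> 0, and A = 0 iff alpha = 0.  As
   gcd(2^r - 1, q - 1) = 1, the additive map z |-> A z^m + B z has kernel of
   size 2 in K when A <> 0, so such a polynomial has one root in K if A = 0 and
   zero or two otherwise.  Summing over the q - 1 lines through the origin gives
   Z = 1 or Z = 2q - 1. *)

Definition pFrobenius_iter (R : comNzRingType) (p : nat) of (p \in [pchar R])%N :=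
  fun (k : nat) (x : R) => x ^+ (p ^ k).

Section IteratedFrobenius.
Variables (R : comNzRingType) (p : nat).
Hypothesis pcharRp : (p \in [pchar R])%N.
Variable k : nat.

Local Notation frob := (pFrobenius_iter pcharRp k).

Lemma pFrobenius_iter0 : frob 0 = 0.
Proof. by rewrite /pFrobenius_iter expr0n expn_eq0 eqn0Ngt prime_gt0 ?(pcharf_prime pcharRp). Qed.

Lemma pFrobenius_iterD : {morph frob : x y / x + y}.
Proof.
move=> x y; apply: exprDn_pchar.
by rewrite (eq_pnat _ (pcharf_eq pcharRp)) pnatX pnat_id ?(pcharf_prime pcharRp).
Qed.

Lemma pFrobenius_iterM : {morph frob : x y / x * y}.
Proof. exact: exprMn. Qed.

Lemma pFrobenius_iterX n : {morph frob : x / x ^+ n}.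
Proof. by move=> x; rewrite /pFrobenius_iter exprAC. Qed.

Lemma pFrobenius_iter_sum (I : Type) (s : seq I) (P : pred I) (E : I -> R) :
  frob (\sum_(i <- s | P i) E i) = \sum_(i <- s | P i) frob (E i).
Proof. exact: (big_morph _ pFrobenius_iterD pFrobenius_iter0). Qed.

HB.instance Definition _ := GRing.isNmodMorphism.Build R R frob
  (pFrobenius_iter0, pFrobenius_iterD).
HB.instance Definition _ := GRing.isMonoidMorphism.Build R R frob
  (expr1n _ _, pFrobenius_iterM).

End IteratedFrobenius.

Definition fixed_field (F : fieldType) (f : F -> F) : {pred F} := fun x => f x == x.

Lemma fixed_fieldP (F : fieldType) (f : F -> F) x : reflect (f x = x) (x \in fixed_field f).
Proof. exact: eqP. Qed.

Section FixedField.
Variables (F : fieldType) (f : {rmorphism F -> F}).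

Lemma fixed_field_divring_closed : divring_closed (fixed_field f).
Proof.
split=> [|x y /fixed_fieldP fx /fixed_fieldP fy|x y /fixed_fieldP fx /fixed_fieldP fy];
  apply/fixed_fieldP; by rewrite ?rmorph1 ?rmorphB ?fmorph_div ?fx ?fy.
Qed.

HB.instance Definition _ :=
  GRing.isDivringClosed.Build F (fixed_field f) fixed_field_divring_closed.

End FixedField.

Lemma expr_expnM_fixed (R : pzSemiRingType) (t : R) (p b c : nat) :
  t ^+ (p ^ b) = t -> t ^+ (p ^ (b * c)) = t.
Proof.
move=> tb; elim: c => [|c IHc]; first by rewrite muln0 expn0 expr1.
by rewrite mulnS expnD mulnC exprM IHc tb.
Qed.

Lemma expr_expn_coprime_fixed (R : pzSemiRingType) (t : R) (p r k : nat) :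
  coprime r k -> t ^+ (p ^ r) = t -> t ^+ (p ^ k) = t -> t ^+ p = t.
Proof.
move=> co_rk tr tk; have [k0 | k_gt0] := posnP k.
  by move: co_rk tr; rewrite k0 /coprime gcdn0 => /eqP ->; rewrite expn1.
have [a _ /dvdnP[c def_c]] := Bezoutl r k_gt0.
move: def_c; rewrite gcdnC (eqP co_rk) => def_c.
have := expr_expnM_fixed c tk; rewrite mulnC -def_c expnD expn1 mulnC exprM.
by rewrite [(a * r)%N]mulnC expr_expnM_fixed.
Qed.

Lemma telescope_sum_expr (R : comPzRingType) (w c : R) (n : nat) : (0 < n)%N ->
  (w - c) * \sum_(1 <= i < n) c ^+ i * w ^+ (n - i) = c * w ^+ n - c ^+ n * w.
Proof.
case: n => // n _.
have -> : \sum_(1 <= i < n.+1) c ^+ i * w ^+ (n.+1 - i) =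
          c * w * \sum_(i < n) w ^+ (n.-1 - i) * c ^+ i.
  rewrite big_add1 big_mkord mulr_sumr; apply: eq_bigr => i _.
  have -> : (n.+1 - i.+1 = (n.-1 - i).+1)%N by have := ltn_ord i; lia.
  by rewrite !exprS; ring.
by rewrite mulrCA -subrXX !exprS; ring.
Qed.

Lemma sum_exprV_rev (R : unitRingType) (v : R) (n : nat) : v \is a GRing.unit ->
  \sum_(1 <= i < n) v ^- i = v ^- n * \sum_(1 <= i < n) v ^+ i.
Proof.
move=> v_unit; rewrite mulr_sumr big_nat_rev /=; apply: eq_big_nat => i /andP[_ lt_in].
have -> : v ^- n = v ^- (n - i) * v ^- i.
  by rewrite -{1}(subnKC (ltnW lt_in)) exprD invrM ?unitrX.
by rewrite add1n subSS -mulrA mulVr ?unitrX ?mulr1.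
Qed.

Lemma size_sum_polyX_pow2 (R : nzRingType) (j : nat) :
  size (\sum_(i < j.+1) 'X^(2 ^ i) : {poly R}) = (2 ^ j).+1.
Proof.
elim: j => [|j IHj]; first by rewrite big_ord1 expn0 size_polyXn.
rewrite big_ord_recr /= addrC size_polyDl size_polyXn // IHj ltnS expnS.
by have := expn_gt0 2 j; lia.
Qed.

Lemma mulrn_pow2_pred (R : nzRingType) (x : R) (r : nat) :
  (2 \in [pchar R])%N -> (0 < r)%N -> x *+ (2 ^ r).-1 = x.
Proof.
move=> ch2 r_gt0; apply/eqP; rewrite -subr_eq0 oppr_pchar2 // -mulrSr prednK ?expn_gt0 //.
by rewrite -(prednK r_gt0) expnS mulrnA (mulrn_pchar ch2) mul0rn.
Qed.

Section CharTwo.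
Variable F : finFieldType.
Hypothesis ch2 : (2 \in [pchar F])%N.

Lemma trace_absD m : {morph @trace_abs F m : x y / x + y}.
Proof.
move=> x y; rewrite /trace_abs -big_split; apply: eq_bigr => i _.
exact: pFrobenius_iterD.
Qed.

Lemma trace_abs0 m : trace_abs m (0 : F) = 0.
Proof. by rewrite /trace_abs big1 // => i _; exact: pFrobenius_iter0. Qed.

Lemma sgn01_add1 (b : F) : b = 0 \/ b = 1 -> sgn01 (b + 1) = - sgn01 b.
Proof. by case=> ->; rewrite /sgn01 ?add0r ?addrr_pchar2 // eqxx oner_eq0. Qed.

End CharTwo.

Section QuadraticExtension.
Variables (F : finFieldType) (k : nat).
Hypothesis ch2 : (2 \in [pchar F])%N.
Hypothesis cardF : #|F| = (2 ^ (2 * k))%N.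

Local Notation q := (2 ^ k)%N.
Local Notation conjq := (pFrobenius_iter ch2 k).
Local Notation K := (fixed_field conjq).
Local Notation T := (@trace_abs F k).

Lemma cardF_sqr : #|F| = (q * q)%N.
Proof. by rewrite cardF mul2n -addnn expnD. Qed.

Lemma q_gt1 : (1 < q)%N.
Proof. by have := card_finNzRing_gt1 F; rewrite cardF_sqr; case: (2 ^ k)%N => [|[]]. Qed.

Lemma k_gt0 : (0 < k)%N.
Proof. by have := q_gt1; case: k. Qed.

Lemma conjqK : involutive conjq.
Proof.
by move=> x; rewrite /pFrobenius_iter -exprM -expnD addnn -mul2n -cardF expf_card.
Qed.

Lemma conjq_expf_pred x : x != 0 -> conjq (x ^+ q.-1) = (x ^+ q.-1)^-1.
Proof.
move=> x0; have u0 : x ^+ q.-1 != 0 by rewrite expf_neq0.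
apply: (mulIf u0); rewrite mulVf // -[conjq _]/(_ ^+ q) -exprSr -exprM.
apply: (mulIf x0); rewrite mul1r -exprSr.
have -> : (q.-1 * q.+1).+1 = (q * q)%N by have := q_gt1; nia.
by rewrite -cardF_sqr expf_card.
Qed.

Lemma add_conjq_in_K x : x + conjq x \in K.
Proof. by apply/fixed_fieldP; rewrite pFrobenius_iterD conjqK addrC. Qed.

Lemma add_conjq_eq0 x : (x + conjq x == 0) = (x \in K).
Proof. by rewrite addr_eq0 oppr_pchar2 // eq_sym. Qed.

Lemma expf_q_pred_K y : y \in K -> y != 0 -> y ^+ q.-1 = 1.
Proof.
move=> /fixed_fieldP Ky y0; apply: (mulIf y0).
by rewrite mul1r -exprSr prednK ?expn_gt0.
Qed.

Lemma exists_notin_K : {δ : F | δ \notin K}.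
Proof.
case: (pickP [pred x | x \notin K]) => [δ δK | allK]; first by exists δ.
pose P : {poly F} := 'X^q - 'X.
have sizeP : size P = q.+1.
  by rewrite size_polyDl ?size_polyXn // size_polyN size_polyX ltnS q_gt1.
have P0 : P != 0 by rewrite -size_poly_eq0 sizeP.
have := max_poly_roots P0 (rs := enum F); rewrite enum_uniq -cardE cardF_sqr sizeP.
have -> : all (root P) (enum F).
  apply/allP => x _; have /negbFE/fixed_fieldP Kx := allK x.
  by rewrite /root /P !hornerE -[x ^+ q]/(conjq x) Kx subrr.
by move=> /(_ isT isT); have := q_gt1; nia.
Qed.

Section Coordinates.
Variable δ : F.
Hypothesis δ_notin_K : δ \notin K.

Local Notation d := (δ + conjq δ).

Let d_neq0 : d != 0. Proof. by rewrite add_conjq_eq0. Qed.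

Definition coord1 x := (x + conjq x) / d.
Definition coord0 x := x + coord1 x * δ.

Lemma coord1_in x : coord1 x \in K.
Proof. by rewrite rpredM ?rpredV ?add_conjq_in_K. Qed.

Lemma coord0_in x : coord0 x \in K.
Proof.
apply/fixed_fieldP; have /fixed_fieldP Kc1 := coord1_in x.
rewrite pFrobenius_iterD pFrobenius_iterM Kc1 -(addKr_pchar2 ch2 δ (conjq δ)) mulrDr.
rewrite [coord1 x * d]divfK ?d_neq0 //.
by rewrite addrCA [conjq x + _]addrCA addrr_pchar2 // addr0 addrC.
Qed.

Lemma coordK x : coord0 x + coord1 x * δ = x.
Proof. by rewrite /coord0 -addrA addrr_pchar2 // addr0. Qed.

Lemma coord1E s t : s \in K -> t \in K -> coord1 (s + t * δ) = t.
Proof.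
move=> /fixed_fieldP Ks /fixed_fieldP Kt.
rewrite /coord1 pFrobenius_iterD pFrobenius_iterM Ks Kt addrACA addrr_pchar2 // add0r -mulrDr.
by rewrite mulfK ?d_neq0.
Qed.

Lemma coord0E s t : s \in K -> t \in K -> coord0 (s + t * δ) = s.
Proof. by move=> Ks Kt; rewrite /coord0 coord1E // -addrA addrr_pchar2 // addr0. Qed.

Lemma big_coord (R : Type) (idx : R) (op : Monoid.com_law idx) (f : F -> R) :
  \big[op/idx]_(x : F) f x = \big[op/idx]_(s in K) \big[op/idx]_(t in K) f (s + t * δ).
Proof.
rewrite (reindex_onto (fun st : F * F => st.1 + st.2 * δ) (fun x => (coord0 x, coord1 x)))
  /=; last by move=> x _; rewrite coordK.
rewrite pair_big_dep; apply: eq_bigl => -[s t] /=.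
apply/eqP/andP => [[<- <-] | [Ks Kt]]; first by rewrite coord0_in coord1_in.
by rewrite coord0E ?coord1E.
Qed.

End Coordinates.

Lemma card_K : #|K| = q.
Proof.
have [δ δ_notin_K] := exists_notin_K.
have : #|F| = (#|K| * #|K|)%N.
  rewrite -sum1_card (big_coord δ_notin_K) /= (eq_bigr (fun=> #|K|)) => [|s _].
    by rewrite sum_nat_const.
  by rewrite sum1_card.
by rewrite cardF_sqr !mulnn => /eqP; rewrite eqn_exp2r // => /eqP.
Qed.

Lemma card_K_nz : #|[predD1 K & 0]| = q.-1.
Proof. by have := cardD1 0 K; rewrite card_K rpred0 add1n => ->. Qed.

Lemma trace_abs_double z : trace_abs (2 * k) z = T (z + conjq z).
Proof.
rewrite (trace_absD ch2) mul2n -addnn /trace_abs big_split_ord /=; congr (_ + _).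
by apply: eq_bigr => i _; rewrite expnD exprM.
Qed.

Lemma trace_abs_idem y : y \in K -> T y ^+ 2 = T y.
Proof.
(* Squaring shifts the terms y^(2^i) cyclically, as y^(2^k) = y. *)
move=> /fixed_fieldP Ky.
have E : \sum_(i < k.+1) y ^+ (2 ^ i) = \sum_(i < k.+1) y ^+ (2 ^ i) by [].
rewrite {1}big_ord_recl big_ord_recr /= expn0 expr1 -[y ^+ _]/(conjq y) Ky in E.
move: E; rewrite [RHS]addrC => /addrI E.
rewrite -[_ ^+ 2]/(pFrobenius_iter ch2 1 _) /trace_abs pFrobenius_iter_sum -{}E.
by apply: eq_bigr => i _; rewrite /pFrobenius_iter -exprM -expnSr.
Qed.

Lemma trace_abs01 y : y \in K -> T y = 0 \/ T y = 1.
Proof.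
move=> /trace_abs_idem; rewrite expr2 => /eqP.
rewrite -{3}[T y]mulr1 -subr_eq0 -mulrBr mulf_eq0 subr_eq0.
by case/orP=> /eqP ->; [left | right].
Qed.

Lemma exists_trace_abs1 : {y | y \in K & T y = 1}.
Proof.
case: (pickP [pred y | (y \in K) && (T y == 1)]) => [y /andP[Ky /eqP Ty] | noT1].
  by exists y.
have T0 y : y \in K -> T y = 0.
  by move=> Ky; case: (trace_abs01 Ky) => // Ty; have := noT1 y; rewrite /= Ky Ty eqxx.
pose P : {poly F} := \sum_(i < k) 'X^(2 ^ i).
have sizeP : size P = (2 ^ k.-1).+1 by rewrite /P -(prednK k_gt0) size_sum_polyX_pow2.
have P0 : P != 0 by rewrite -size_poly_eq0 sizeP.
have := max_poly_roots P0 (rs := enum K); rewrite enum_uniq -cardE card_K sizeP.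
have -> : all (root P) (enum K).
  apply/allP => y; rewrite mem_enum => Ky.
  by rewrite /root /P horner_sum; under eq_bigr do rewrite hornerXn; rewrite -/(trace_abs k y) T0.
move=> /(_ isT isT); rewrite -{1}(prednK k_gt0) expnS.
by have := expn_gt0 2 k.-1; lia.
Qed.

Lemma sum_sgn_trace_K : \sum_(y in K) sgn01 (T y) = 0.
Proof.
have [y1 Ky1 Ty1] := exists_trace_abs1.
suff : \sum_(y in K) sgn01 (T y) = - \sum_(y in K) sgn01 (T y) by lia.
rewrite -sumrN (reindex_inj (addIr y1)) /=; apply: eq_big => [y | y].
  by rewrite rpredDr.
rewrite rpredDr // => Ky.
by rewrite (trace_absD ch2) Ty1 sgn01_add1 //; apply: trace_abs01.
Qed.

Lemma sum_sgn_trace_mulK c : c \in K ->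
  \sum_(y in K) sgn01 (T (y * c)) = if c == 0 then q%:Z else 0.
Proof.
move=> Kc; have [-> | c0] := eqVneq c 0.
  under eq_bigr do rewrite mulr0 (trace_abs0 ch2) /sgn01 eqxx.
  by rewrite sumr_const card_K -natz.
rewrite -[RHS]sum_sgn_trace_K [RHS](reindex_inj (mulIf c0)) /=.
by apply: eq_bigl => y; rewrite rpredMr ?unitfE.
Qed.

Lemma sum_sgn_trace_homogeneous (c : F -> F) :
    (forall x, c x \in K) -> (forall y x, y \in K -> y != 0 -> c (y * x) = y * c x) ->
  (\sum_x sgn01 (T (c x))) *+ q.-1 = (q * #|[set x | c x == 0]|)%:Z - (q * q)%:Z.
Proof.
move=> cK cZ.
transitivity (\sum_(y in [predD1 K & 0]) \sum_x sgn01 (T (y * c x))).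
  rewrite -card_K_nz -sumr_const; apply: eq_bigr => y /andP[y0 Ky].
  by rewrite (reindex_inj (mulfI y0)) /=; apply: eq_bigr => x _; rewrite cZ.
rewrite exchange_big /=.
transitivity (\sum_x ((if c x == 0 then q%:Z else 0) - 1)).
  apply: eq_bigr => x _.
  rewrite -(sum_sgn_trace_mulK (cK x)) [X in _ = X - _](bigD1 0) ?rpred0 //=.
  rewrite mul0r (trace_abs0 ch2) /sgn01 eqxx addrC addrK.
  by apply: eq_bigl => y; rewrite !inE andbC.
by rewrite sumrB -big_mkcond !sumr_const cardF_sqr cardsE; lia.
Qed.

Lemma card_zeros_homogeneous (P : F -> F) (n : nat) (δ : F) : δ \notin K ->
    (forall t w, t \in K -> P (t * w) = t ^+ n * P w) ->
  #|[set w | P w == 0]| =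
  (#|[set s in K | (P s == 0)%R]| + q.-1 * #|[set z in K | (P (z + δ) == 0)%R]|)%N.
Proof.
move=> δK PZ; rewrite -!sum1dep_card big_mkcond (big_coord δK) /= exchange_big /=.
rewrite (bigD1 0%R) ?rpred0 //=; congr (_ + _)%N.
  by rewrite big_mkcondr; apply: eq_bigr => s _; rewrite mul0r addr0.
rewrite -card_K_nz -sum_nat_const; apply: eq_big => [t | t /andP[Kt t0]].
  by rewrite !inE andbC.
rewrite big_mkcondr (reindex_inj (mulIf t0)) /=; apply: eq_big => [z | z _].
  by rewrite rpredMr ?unitfE.
by rewrite [z * t]mulrC -mulrDr PZ // mulf_eq0 expf_eq0 (negbTE t0) andbF.
Qed.

Lemma card_K_roots_linear (B C : F) : B \in K -> C \in K -> B != 0 ->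
  #|[set z in K | B * z + C == 0]| = 1%N.
Proof.
move=> KB KC B0; suff -> : [set z in K | B * z + C == 0] = [set - C / B] by rewrite cards1.
apply/setP => z.
rewrite !inE addr_eq0 mulrC -{1}(divfK B0 (- C)) (can_eq (mulfK B0)).
by case: eqP => [-> | _]; rewrite ?andbT ?andbF // rpred_div ?rpredN.
Qed.

Section PowerMap.
Variable r : nat.
Hypothesis coprime_rk : coprime r k.
Local Notation m := (2 ^ r)%N.

Lemma expf_pred_inj : {in [predD1 K & 0] &, injective (fun z => z ^+ m.-1)}.
Proof.
move=> z w /andP[z0 Kz] /andP[w0 Kw] /= zw.
pose t := z / w; have t0 : t != 0 by rewrite mulf_neq0 ?invr_eq0.
have tm : t ^+ m = t.
  by rewrite -(prednK (expn_gt0 2 r)) exprSr exprMn exprVn zw divff ?expf_neq0 ?mul1r.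
have /fixed_fieldP tk : t \in K by rewrite rpred_div.
have t1 : t = 1.
  by apply: (mulIf t0); rewrite mul1r -expr2 (expr_expn_coprime_fixed coprime_rk tm tk).
by rewrite -(divfK w0 z) -/t t1 mul1r.
Qed.

Lemma expf_pred_onto c : c \in [predD1 K & 0] ->
  exists2 z, z \in [predD1 K & 0] & z ^+ m.-1 = c.
Proof.
move=> Kc; pose A := [set z in [predD1 K & 0]].
have sub : [set z ^+ m.-1 | z in A] \subset A.
  apply/subsetP => y /imsetP[z]; rewrite !inE => /andP[z0 Kz] ->.
  by rewrite expf_neq0 ?rpredX.
have /eqP eqA : [set z ^+ m.-1 | z in A] == A.
  rewrite eqEcard sub card_in_imset ?leqnn // => z w; rewrite !inE; exact: expf_pred_inj.
have : c \in A by rewrite inE.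
by rewrite -eqA => /imsetP[z]; rewrite inE => Az ->; exists z.
Qed.

Lemma linearized_roots_K (A B : F) : A \in K -> B \in K -> A != 0 -> B != 0 ->
  exists2 z0, z0 \in [predD1 K & 0] &
    forall y, y \in K -> (A * y ^+ m + B * y == 0) = (y == 0) || (y == z0).
Proof.
move=> KA KB A0 B0.
have [z0 Kz0 z0E] : exists2 z0, z0 \in [predD1 K & 0] & z0 ^+ m.-1 = B / A.
  by apply: expf_pred_onto; rewrite !inE mulf_neq0 ?invr_eq0 ?rpred_div.
exists z0 => // y Ky.
rewrite -(prednK (expn_gt0 2 r)) exprSr mulrA -mulrDl mulf_eq0 orbC.
have [// | y0] := eqVneq y 0.
rewrite /= addr_eq0 oppr_pchar2 // (can2_eq (mulKf A0) (mulVKf A0)) mulrC -z0E.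
by apply/eqP/eqP => [yE | -> //]; apply: expf_pred_inj; rewrite ?inE ?y0.
Qed.

Lemma card_K_roots_affine (A B C : F) : A \in K -> B \in K -> C \in K -> A != 0 -> B != 0 ->
  #|[set z in K | A * z ^+ m + B * z + C == 0]| \in [:: 0; 2]%N.
Proof.
move=> KA KB KC A0 B0; pose L z := A * z ^+ m + B * z.
have LD z w : L (z + w) = L z + L w.
  rewrite /L -[(z + w) ^+ m]/(pFrobenius_iter ch2 r (z + w)) pFrobenius_iterD.
  by rewrite mulrDr mulrDr addrACA.
have [z0 /andP[z00 Kz0] kerL] := linearized_roots_K KA KB A0 B0.
change (#|[set z in K | L z + C == 0]| \in [:: 0; 2]%N).
case: (set_0Vmem [set z in K | L z + C == 0]) => [-> | [z1]]; first by rewrite cards0.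
rewrite inE => /andP[Kz1]; rewrite addr_eq0 oppr_pchar2 // => /eqP Lz1.
suff -> : [set z in K | L z + C == 0] = [set z1; z1 + z0].
  by rewrite cards2 -{1}[z1]addr0 (can_eq (addKr z1)) eq_sym z00.
apply/setP => z; rewrite !inE; case Kz: (z \in K) => /=.
  rewrite -Lz1 -LD kerL ?rpredD // addr_eq0 oppr_pchar2 //.
  by rewrite (can2_eq (addrK_pchar2 ch2 z1) (addrK_pchar2 ch2 z1)) addrC.
by apply/esym/norP; split; apply: contraFN Kz => /eqP ->; rewrite ?rpredD.
Qed.

End PowerMap.
End QuadraticExtension.

Section VectorialBent.
Variables (F : finFieldType) (k r : nat).
Hypothesis ch2 : (2 \in [pchar F])%N.
Hypothesis cardF : #|F| = (2 ^ (2 * k))%N.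
Hypotheses (r_gt0 : (0 < r)%N) (r_le_k : (r <= k)%N) (coprime_rk : coprime r k).

Local Notation q := (2 ^ k)%N.
Local Notation m := (2 ^ r)%N.
Local Notation p := (2 ^ (k - r))%N.
Local Notation conjq := (pFrobenius_iter ch2 k).
Local Notation K := (fixed_field conjq).
Local Notation T := (@trace_abs F k).
Local Notation G := (@G_prop2 F k r).

Definition geom_sum (v : F) := \sum_(1 <= i < m) v ^+ i.

Lemma conjq_mul_expf_pred x : conjq x = x * x ^+ q.-1.
Proof. by rewrite -exprS prednK ?expn_gt0. Qed.

Lemma G_prop2E x : G x = x * x ^+ q.-1 * geom_sum ((x ^+ q.-1) ^+ p).
Proof.
rewrite /G_prop2 /geom_sum mulr_sumr; apply: eq_bigr => i _.
by rewrite subn1 exprD expr1 mulnC exprM exprD expr1 mulnC exprM mulrC mulrA mulrAC.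
Qed.

Lemma G_prop2Z y x : y \in K -> y != 0 -> G (y * x) = y * G x.
Proof.
move=> Ky y0; rewrite /G_prop2 mulr_sumr; apply: eq_bigr => i _.
by rewrite exprMn exprD expr1 mulnC exprM subn1 expf_q_pred_K // expr1n mul1r.
Qed.

Lemma G_prop2_in_K x : G x \in K.
Proof.
have [-> | x0] := eqVneq x 0; first by rewrite G_prop2E !mul0r rpred0.
set u := x ^+ q.-1; set v := u ^+ p.
have u0 : u != 0 by rewrite expf_neq0.
have cu : conjq u = u^-1 := conjq_expf_pred ch2 cardF x0.
have vm : v ^+ m = u^-1 by rewrite -exprM mulnC -expnD subnKC // -cu.
have cv : conjq v = v^-1 by rewrite pFrobenius_iterX cu exprVn.
have cS : conjq (geom_sum v) = u * geom_sum v.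
  rewrite pFrobenius_iter_sum; under eq_bigr do rewrite pFrobenius_iterX cv exprVn.
  by rewrite sum_exprV_rev ?unitfE ?expf_neq0 // vm invrK.
apply/fixed_fieldP; rewrite G_prop2E -/u -/v !pFrobenius_iterM conjq_mul_expf_pred -/u cu cS.
by rewrite mulfK // mulrA.
Qed.

Section Walsh.
Variables lam a : F.
Hypotheses (Klam : lam \in K) (lam0 : lam != 0).

Local Notation alpha := (lam + (a + conjq a)).

Definition walsh_phase x := lam * G x + (a * x + conjq (a * x)).

(* Obtained from [walsh_phase] by the substitution w = x^(2^(k-r)), see
   [walsh_phase_eq0]. *)
Definition walsh_form w := lam * \sum_(1 <= i < m) conjq w ^+ i * w ^+ (m - i)
  + a * conjq w ^+ m + conjq a * w ^+ m.

Lemma walshE : walsh (2 * k) k G lam a = \sum_x sgn01 (T (walsh_phase x)).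
Proof. by apply: eq_bigr => x _; rewrite trace_abs_double -(trace_absD ch2). Qed.

Lemma walsh_phase_in_K x : walsh_phase x \in K.
Proof. by rewrite rpredD ?rpredM ?G_prop2_in_K ?add_conjq_in_K. Qed.

Lemma walsh_phaseZ y x : y \in K -> y != 0 -> walsh_phase (y * x) = y * walsh_phase x.
Proof.
move=> /[dup] Ky /fixed_fieldP cy y0; rewrite /walsh_phase G_prop2Z // mulrCA.
by rewrite [a * (y * x)]mulrCA pFrobenius_iterM cy -!mulrDr.
Qed.

Lemma walsh_formZ t w : t \in K -> walsh_form (t * w) = t ^+ m * walsh_form w.
Proof.
move=> /fixed_fieldP ct; rewrite /walsh_form pFrobenius_iterM ct.
have -> : \sum_(1 <= i < m) (t * conjq w) ^+ i * (t * w) ^+ (m - i) =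
          t ^+ m * \sum_(1 <= i < m) conjq w ^+ i * w ^+ (m - i).
  rewrite mulr_sumr; apply: eq_big_nat => i /andP[_ lt_im].
  by rewrite !exprMn mulrACA -exprD subnKC // ltnW.
by rewrite !exprMn; ring.
Qed.

Lemma walsh_form_K s : s \in K -> walsh_form s = alpha * s ^+ m.
Proof.
move=> /fixed_fieldP cs; rewrite /walsh_form cs.
have -> : \sum_(1 <= i < m) s ^+ i * s ^+ (m - i) = s ^+ m *+ m.-1.
  rewrite -subn1 -sumr_const_nat; apply: eq_big_nat => i /andP[_ lt_im].
  by rewrite -exprD subnKC // ltnW.
by rewrite mulrn_pow2_pred //; ring.
Qed.

Lemma walsh_form0 : walsh_form 0 = 0.
Proof. by rewrite walsh_form_K ?rpred0 // expr0n expn_eq0 r_gt0 mulr0. Qed.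

Lemma walsh_phase_eq0 x : (walsh_phase x == 0) = (walsh_form (x ^+ p) == 0).
Proof.
have [-> | x0] := eqVneq x 0.
  rewrite expr0n expn_eq0 /= walsh_form0 /walsh_phase G_prop2E !(mul0r, mulr0).
  by rewrite pFrobenius_iter0 !addr0.
set u := x ^+ q.-1; set v := u ^+ p; set w := x ^+ p.
have u0 : u != 0 by rewrite expf_neq0.
have w0 : w != 0 by rewrite expf_neq0.
have cw : conjq w = w * v by rewrite conjq_mul_expf_pred /w /v /u exprAC.
have vm : v ^+ m = u^-1.
  by rewrite -exprM mulnC -expnD subnKC // -(conjq_expf_pred ch2 cardF x0).
pose Q := lam * geom_sum v + a * v ^+ m + conjq a.
have phaseE : walsh_phase x = x * u * Q.
  rewrite /walsh_phase G_prop2E -/u -/v pFrobenius_iterM (conjq_mul_expf_pred x) -/u /Q vm.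
  by field.
have formE : walsh_form w = w ^+ m * Q.
  rewrite /walsh_form cw /Q /geom_sum.
  have -> : \sum_(1 <= i < m) (w * v) ^+ i * w ^+ (m - i) =
            w ^+ m * \sum_(1 <= i < m) v ^+ i.
    rewrite mulr_sumr; apply: eq_big_nat => i /andP[_ lt_im].
    by rewrite exprMn mulrAC -exprD subnKC // ltnW.
  by rewrite exprMn; ring.
by rewrite phaseE formE !mulf_eq0 (negbTE x0) (negbTE u0) expf_eq0 (negbTE w0) andbF.
Qed.

Lemma card_walsh_phase_zerosE :
  #|[set x | walsh_phase x == 0]| = #|[set w | walsh_form w == 0]|.
Proof.
rewrite -[RHS](card_preimset _ (fmorph_inj (pFrobenius_iter ch2 (k - r)))).
by apply: eq_card => x; rewrite !inE walsh_phase_eq0.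
Qed.

Lemma walsh_form_line δ : δ \notin K -> exists A B C,
  [/\ A \in K, B \in K, C \in K, B != 0 & (A == 0) = (alpha == 0)] /\
  forall z, z \in K -> (walsh_form (z + δ) == 0) = (A * z ^+ m + B * z + C == 0).
Proof.
move=> δK; set d := δ + conjq δ.
have d0 : d != 0 by rewrite /d add_conjq_eq0.
have Kd : d \in K := add_conjq_in_K ch2 cardF δ.
have frobD (x y : F) : (x + y) ^+ m = x ^+ m + y ^+ m by exact: pFrobenius_iterD.
pose C := lam * (conjq δ * δ ^+ m + δ * conjq δ ^+ m)
  + d * (a * conjq δ ^+ m + conjq a * δ ^+ m).
exists (d * alpha), (lam * d ^+ m), C; split.
  split.
  - exact: rpredM Kd (rpredD Klam (add_conjq_in_K ch2 cardF a)).
  - by rewrite rpredM ?rpredX.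
  - have -> : C = lam * (conjq δ * δ ^+ m + conjq (conjq δ * δ ^+ m)) +
                  d * (a * conjq δ ^+ m + conjq (a * conjq δ ^+ m)).
      by rewrite !pFrobenius_iterM ![conjq (_ ^+ m)]pFrobenius_iterX !conjqK.
    by rewrite rpredD ?rpredM // add_conjq_in_K.
  - by rewrite mulf_neq0 ?expf_neq0.
  - by rewrite mulf_eq0 (negbTE d0).
move=> z /fixed_fieldP cz.
have cw : conjq (z + δ) = z + conjq δ by rewrite pFrobenius_iterD cz.
have dw : (z + δ) - conjq (z + δ) = d.
  by rewrite cw oppr_pchar2 // addrACA addrr_pchar2 // add0r.
rewrite -(mulrI_eq0 _ (mulfI d0)) /walsh_form !mulrDr mulrCA -{1}dw.
rewrite telescope_sum_expr ?expn_gt0 // cw !frobD oppr_pchar2 // /C /d; congr (_ == 0).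
move: (z ^+ m) (δ ^+ m) (conjq δ ^+ m) (conjq δ) (conjq a) => zm dm cdm cd ca.
(* [ring] ignores the characteristic: add the vanishing term 2 lam z^(m+1). *)
by rewrite -[RHS]addr0 -(addrr_pchar2 ch2 (lam * (z * zm))); ring.
Qed.

Lemma card_walsh_form_K :
  #|[set s in K | walsh_form s == 0]| = if alpha == 0 then q else 1%N.
Proof.
have [al0 | al0] := eqVneq alpha 0.
  rewrite -(card_K ch2 cardF) -cardsE; apply: eq_card => s; rewrite !inE.
  by case Ks: (s \in K); rewrite //= walsh_form_K // al0 mul0r eqxx.
suff -> : [set s in K | walsh_form s == 0] = [set 0] by rewrite cards1.
apply/setP => s; rewrite !inE.
have [-> | s0] := eqVneq s 0; first by rewrite rpred0 walsh_form0 eqxx.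
case Ks: (s \in K) => //=.
by rewrite walsh_form_K // mulf_eq0 (negbTE al0) expf_eq0 (negbTE s0) andbF.
Qed.

Lemma card_walsh_phase_zeros_in : #|[set x | walsh_phase x == 0]| \in [:: 1; q + q.-1]%N.
Proof.
have [δ δK] := exists_notin_K ch2 cardF.
rewrite card_walsh_phase_zerosE (card_zeros_homogeneous cardF δK walsh_formZ).
have [A [B [C [[KA KB KC B0 A0E] lineE]]]] := walsh_form_line δK.
have -> : [set z in K | walsh_form (z + δ) == 0] = [set z in K | A * z ^+ m + B * z + C == 0].
  by apply/setP => z; rewrite !inE; case Kz: (z \in K); rewrite //= lineE.
rewrite card_walsh_form_K -A0E; have := q_gt1 cardF; have [A0 | A0] := eqVneq A 0.
  have -> : [set z in K | A * z ^+ m + B * z + C == 0] = [set z in K | B * z + C == 0].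
    by apply/setP => z; rewrite !inE A0 mul0r add0r.
  by rewrite card_K_roots_linear // !inE; lia.
have := card_K_roots_affine coprime_rk KA KB KC A0 B0.
by rewrite !inE => /orP[] /eqP ->; lia.
Qed.

Lemma walsh_abs : `|walsh (2 * k) k G lam a| = q%:Z.
Proof.
have := sum_sgn_trace_homogeneous cardF walsh_phase_in_K walsh_phaseZ.
rewrite -walshE; have := card_walsh_phase_zeros_in; rewrite !inE.
move: (walsh _ _ _ _ _) #|_| => W Z; have := q_gt1 cardF.
move: (2 ^ k)%N => Q Q_gt1 /orP[] /eqP-> WE; nia.
Qed.

End Walsh.
End VectorialBent.

Theorem proposition2 (F : finFieldType) (k r : nat) :
  (2 \in [pchar F])%N -> #|F| = (2 ^ (2 * k))%N ->
  (1 < r)%N -> (r < k)%N -> coprime r k ->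
  (forall x : F, in_subfield k (G_prop2 k r x)) /\
  @vectorial_bent F (2 * k) k (@G_prop2 F k r).
Proof.
move=> ch2 cardF r_gt1 r_lt_k coprime_rk.
have r_gt0 := ltnW r_gt1; have r_le_k := ltnW r_lt_k.
split=> [x | lam Klam lam0 a]; first exact: G_prop2_in_K.
exact: walsh_abs.
Qed.
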